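(* Let $G=(Q,A,\delta)$ be an MDP, $q\in Q$, reals $a<0<b$ and $a\le\eta\le0$, and let $v$ be an $[a,b]$-valuation that is $\eta$-bounded with respect to some $\mathrm{NZ}\subseteq Q\times A$. For $n\in\mathbb N$ and $M\ge0$ define $f^{n,M}_v$ on infinite runs by $f^{n,M}_v(\rho)=s^n_v(\rho)$ if $c^n_v(\rho)=n$ and $f^{n,M}_v(\rho)=-M$ otherwise. Then for all $s>0$, $n\in\mathbb N$, $M\ge0$ and every strategy $\sigma$, $$\mathbb E^\sigma_q\big[G,\exp(s(f^{n,M}_v-n\eta))\big]\le\exp\Big(n\frac{s^2(b-a)^2}{8}\Big)+n\exp\Big(s(-M+n\max(|a|,|b|))+n\frac{s^2(b-a)^2}{8}\Big).$$
   Context: An MDP $G=(Q,A,\delta)$ has finite non-empty $Q,A$ and $\delta:Q\times A\to\mathcal D(Q)$; strategies are maps $\sigma:Q\cdot(A\cdot Q)^*\to\mathcal D(A)$, and $\mathbb P^\sigma_q[G,\cdot]$ (with expectation $\mathbb E^\sigma_q[G,\cdot]$) is the induced probability measure on infinite runs $(Q\cdot A)^\omega$ from $q$. An $[a,b]$-valuation is a function $v:Q\cdot(A\cdot Q)^*\to[a,b]$. It is $\eta$-bounded w.r.t. $\mathrm{NZ}\subseteq Q\times A$ if for every finite run $\rho$ with last state $\mathrm{last}(\rho)$ and every action $\alpha$: if $(\mathrm{last}(\rho),\alpha)\notin\mathrm{NZ}$ then $v(\rho\cdot(\alpha,q'))=0$ for all $q'\in Q$; if $(\mathrm{last}(\rho),\alpha)\in\mathrm{NZ}$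 then $\sum_{q'}\delta(\mathrm{last}(\rho),\alpha)(q')\,v(\rho\cdot(\alpha,q'))\le\eta$. For an infinite run $\rho=(q_0,a_0)(q_1,a_1)\cdots$, let $\mathrm{IndNZ}(\rho)=\{i:(q_i,a_i)\in\mathrm{NZ}\}$ and $\mathrm{IndNZ}^n(\rho)$ its $\min(n,|\mathrm{IndNZ}(\rho)|)$ smallest elements; $s^n_v(\rho):=\sum_{i\in\mathrm{IndNZ}^n(\rho)}v(q_0(a_0,q_1)\cdots(a_i,q_{i+1}))$ and $c^n_v(\rho):=|\mathrm{IndNZ}^n(\rho)|$. *)

From HB Require Import structures.
From mathcomp Require Import all_boot all_order all_algebra.
From mathcomp Require Import all_classical all_reals all_analysis.
Set Implicit Arguments. Unset Strict Implicit. Unset Printing Implicit Defensive.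
Import Order.TTheory GRing.Theory Num.Theory.
Local Open Scope classical_set_scope.
Local Open Scope ring_scope.

Section MDP.
Variables (R : realType) (Q A : finType).

(* A finite run q0 (a0,q1) ... (a_{k-1},q_k) is a pair (q0, [:: (a0,q1); ...]). *)
Definition finrun := (Q * seq (A * Q))%type.

Definition last_state (h : finrun) : Q := last h.1 [seq p.2 | p <- h.2].

Definition ext (h : finrun) (al : A) (q' : Q) : finrun := (h.1, rcons h.2 (al, q')).

Definition run := nat -> (Q * A)%type.

Definition prefix (r : run) (k : nat) : finrun :=
  ((r 0%N).1, [seq ((r j).2, (r j.+1).1) | j <- iota 0 k]).

Definition is_dist (T : finType) (p : T -> R) : Prop :=
  (forall t, 0 <= p t) /\ \sum_(t : T) p t = 1.

Definition is_mdp (delta : Q -> A -> Q -> R) : Prop :=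
  forall q al, is_dist (delta q al).

Definition is_strategy (sigma : finrun -> A -> R) : Prop :=
  forall h, is_dist (sigma h).

Definition is_valuation (a b : R) (v : finrun -> R) : Prop :=
  forall h, a <= v h <= b.

Definition eta_bounded (delta : Q -> A -> Q -> R) (NZ : pred (Q * A))
    (eta : R) (v : finrun -> R) : Prop :=
  forall (h : finrun) (al : A),
    (~~ NZ (last_state h, al) -> forall q', v (ext h al q') = 0) /\
    (NZ (last_state h, al) ->
       \sum_(q' : Q) delta (last_state h) al q' * v (ext h al q') <= eta).

Definition nzcount (NZ : pred (Q * A)) (r : run) (N : nat) : nat :=
  count (fun i => NZ (r i)) (iota 0 N).

(* IndNZ^n(r): the min(n, |IndNZ(r)|) smallest elements of IndNZ(r), i.e. the
   indices i in IndNZ(r) with fewer than n elements of IndNZ(r) below i *)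
Definition IndNZn (NZ : pred (Q * A)) (n : nat) (r : run) : set nat :=
  [set i | NZ (r i) /\ (nzcount NZ r i < n)%N].

Definition s_n (v : finrun -> R) (NZ : pred (Q * A)) (n : nat) (r : run) : R :=
  \sum_(i \in IndNZn NZ n r) v (prefix r i.+1).

Definition c_n (NZ : pred (Q * A)) (n : nat) (r : run) : nat :=
  \big[addn/0%N]_(i \in IndNZn NZ n r) 1%N.

Definition f_nM (v : finrun -> R) (NZ : pred (Q * A)) (n : nat) (M : R)
    (r : run) : R :=
  if c_n NZ n r == n then s_n v NZ n r else - M.

Definition cyl_prob (delta : Q -> A -> Q -> R) (sigma : finrun -> A -> R)
    (q : Q) (w : run) (k : nat) : R :=
  (if (w 0%N).1 == q then 1 else 0) *
  (\prod_(i < k.+1) sigma (prefix w i) (w i).2) *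
  (\prod_(i < k) delta (w i).1 (w i).2 (w i.+1).1).

End MDP.

(* The run process X : T -> run on a probability space (T, P) has law
   P^sigma_q[G, .]: coordinates are measurable and every cylinder
   has the probability prescribed by delta and sigma.  Since the cylinders
   generate the product sigma-algebra on runs and form a pi-system, this
   determines the law of X uniquely. *)
Definition is_run_law (R : realType) (Q A : finType) (d : measure_display)
    (T : measurableType d) (P : probability T R) (X : T -> run Q A)
    (delta : Q -> A -> Q -> R) (sigma : finrun Q A -> A -> R) (q : Q) : Prop :=
  (forall (i : nat) (x : Q * A), measurable [set t | X t i = x]) /\
  (forall (k : nat) (w : run Q A),
     P [set t | forall i, (i <= k)%N -> X t i = w i] =
     (cyl_prob delta sigma q w k)%:E).

(* Let S_K and C_K be the sum of the valuations and the number of indices of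
   IndNZ^n among the first K steps of a run, and c = s^2 (b - a)^2 / 8.  A step
   counted in IndNZ^n has conditional mean valuation at most eta, so Hoeffding's
   lemma makes exp (s (S_K - eta C_K) - c C_K) a supermartingale of expectation
   at most 1.  Once n indices are counted, exp (s (f^{n,M}_v - n eta)) is
   exp (n c) times this supermartingale; on the other runs f^{n,M}_v = -M, n >= 1
   and -eta <= max(|a|, |b|), which gives the second term.  The truncations to
   the first K steps are eventually constant along every run, so the bound
   passes to the limit by Fatou's lemma. *)

From HB Require Import structures.
From mathcomp Require Import all_boot all_order all_algebra.
From mathcomp Require Import all_classical all_reals all_analysis.
From mathcomp Require Import ring lra zify measurable_realfun.
(* Imported last, so that [prefix] is the prefix of a run, not [seq.prefix]. *)
Import Order.TTheory GRing.Theory Num.Theory.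
Import numFieldNormedType.Exports.
Local Open Scope classical_set_scope.
Local Open Scope ring_scope.
Set Implicit Arguments. Unset Strict Implicit. Unset Printing Implicit Defensive.

Section Hoeffding.
Variable R : realType.

Lemma ge0_of_derive_ge0 (f df : R -> R) :
  (forall x, is_derive x (1 : R) f (df x)) -> (forall x, 0 <= x -> 0 <= df x) ->
  f 0 = 0 -> forall x, 0 <= x -> 0 <= f x.
Proof.
move=> fdf df_ge0 f0 x x_ge0.
have [|c c_in] := @MVT_segment _ f df 0 x x_ge0 (fun y _ => fdf y).
  apply/continuous_subspaceT => y; apply/differentiable_continuous.
  by apply/derivable1_diffP; have [] := fdf y.
rewrite f0 !subr0 => ->; rewrite mulr_ge0 // df_ge0 //.
by move: c_in; rewrite in_itv /= => /andP[].
Qed.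

Section Bernoulli.
Variable p : R.
Hypotheses (p_ge0 : 0 <= p) (p_le1 : p <= 1).

Definition bern_mgf (u : R) := 1 - p + p * expR u.

Lemma bern_mgf_gt0 u : 0 < bern_mgf u.
Proof.
rewrite /bern_mgf; have e_gt0 := expR_gt0 u.
have pe_ge0 := mulr_ge0 p_ge0 (ltW e_gt0).
have [p_lt1|p_ge1] := ltP p 1; first lra.
have -> : p = 1 by apply/le_anti/andP.
by rewrite subrr add0r mul1r.
Qed.

Lemma is_derive_bern_mgf x : is_derive x (1 : R) bern_mgf (p * expR x).
Proof. by apply: is_derive_eq; rewrite add0r mul1r. Qed.

(* the derivative of [p u + u^2/8 - ln (bern_mgf u)] *)
Lemma bern_mgf_slack_deriv_ge0 u :
  0 <= u -> 0 <= u / 4 + (p - 1) + (1 - p) * (bern_mgf u)^-1.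
Proof.
move: u; apply: (ge0_of_derive_ge0 (f := fun x => x / 4 + (p - 1) + (1 - p) * (bern_mgf x)^-1)
  (df := fun x => 4^-1 - (1 - p) * (p * expR x) / bern_mgf x ^+ 2)).
- move=> x; have dV := is_deriveV (lt0r_neq0 (bern_mgf_gt0 x)) (is_derive_bern_mgf x).
  apply: is_derive_eq; rewrite !scaler0 addr0 add0r /GRing.scale /= mulr1.
  by rewrite mulNr mulrN; congr (_ - _); rewrite mulrCA mulrC.
- move=> x _; have D0 := bern_mgf_gt0 x.
  have amgm : 4 * ((1 - p) * (p * expR x)) <= bern_mgf x ^+ 2.
    by rewrite /bern_mgf; have := sqr_ge0 (1 - p - p * expR x); nra.
  rewrite subr_ge0 ler_pdivrMr ?exprn_gt0 //; lra.
- by rewrite /bern_mgf expR0 mulr1 subrK invr1; lra.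
Qed.

Lemma ln_bern_mgf_le u : 0 <= u -> ln (bern_mgf u) <= p * u + u ^+ 2 / 8.
Proof.
move=> u_ge0; rewrite -subr_ge0; move: u u_ge0.
apply: (ge0_of_derive_ge0 (f := fun x => p * x + x ^+ 2 / 8 - ln (bern_mgf x))
  (df := fun x => x / 4 + (p - 1) + (1 - p) * (bern_mgf x)^-1)).
- move=> x; have D0 := bern_mgf_gt0 x.
  have := is_derive1_comp (is_derive1_ln D0) (is_derive_bern_mgf x).
  move=> dln; apply: is_derive_eq; rewrite !scaler0 ?addr0 ?add0r /GRing.scale /=.
  by rewrite ?mulr1; move: D0; rewrite /bern_mgf => D0; field; lra.
- exact: bern_mgf_slack_deriv_ge0.
- by rewrite /bern_mgf expR0 mulr1 subrK ln1; lra.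
Qed.

(* The left-hand side is E exp (u (X - p)) for X ~ Bernoulli(p). *)
Lemma hoeffding_bernoulli u : 0 <= u ->
  (1 - p) * expR (- (p * u)) + p * expR ((1 - p) * u) <= expR (u ^+ 2 / 8).
Proof.
move=> u_ge0.
have mgf_le : bern_mgf u <= expR (p * u + u ^+ 2 / 8).
  rewrite -ler_ln ?posrE ?expR_gt0 ?bern_mgf_gt0 // expRK.
  exact: ln_bern_mgf_le.
rewrite (_ : expR (u ^+ 2 / 8) = expR (- (p * u)) * expR (p * u + u ^+ 2 / 8));
  last by rewrite -expRD; congr expR; ring.
rewrite (_ : (1 - p) * u = u + - (p * u)); last by ring.
rewrite expRD (_ : (1 - p) * expR (- (p * u)) + p * (expR u * expR (- (p * u))) =
  expR (- (p * u)) * bern_mgf u); last by rewrite /bern_mgf; ring.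
by rewrite ler_pM2l ?expR_gt0.
Qed.

End Bernoulli.

Lemma expR_chord (a b c s y : R) : a < b -> a <= y -> y <= b ->
  (b - a) * expR (s * (y - c)) <=
  (b - y) * expR (s * (a - c)) + (y - a) * expR (s * (b - c)).
Proof.
move=> ab ay yb; set E := expR (s * (y - c)).
have tangent z : E * (1 + s * (z - y)) <= expR (s * (z - c)).
  rewrite (_ : s * (z - c) = s * (y - c) + s * (z - y)); last by ring.
  by rewrite expRD ler_pM2l ?expR_gt0 // expR_ge1Dx.
rewrite (_ : (b - a) * E = (b - y) * (E * (1 + s * (a - y))) +
                           (y - a) * (E * (1 + s * (b - y)))); last by ring.
by apply: lerD; apply: ler_wpM2l; rewrite ?tangent //; lra.
Qed.

Lemma hoeffding_lemma (T : finType) (d y : T -> R) (a b eta s : R) :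
  (forall t, 0 <= d t) -> \sum_t d t = 1 ->
  (forall t, a <= y t <= b) -> \sum_t d t * y t <= eta ->
  a <= eta <= b -> a < b -> 0 <= s ->
  \sum_t d t * expR (s * (y t - eta)) <= expR (s ^+ 2 * (b - a) ^+ 2 / 8).
Proof.
move=> d_ge0 d_sum1 y_ab y_mean /andP[a_eta eta_b] ab s_ge0.
have ba_gt0 : 0 < b - a by lra.
set A := expR (s * (a - eta)); set B := expR (s * (b - eta)).
set al := (b * A - a * B) / (b - a); set be := (B - A) / (b - a).
have be_ge0 : 0 <= be.
  by rewrite divr_ge0 ?subr_ge0 ?ler_expR ?ler_wpM2l //; lra.
(* Convexity reduces to the two-point distribution on {a, b} with mean eta. *)
have chord t : expR (s * (y t - eta)) <= al + be * y t.
  have /andP[ay yb] := y_ab t.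
  rewrite -(ler_pM2l ba_gt0).
  have -> : (b - a) * (al + be * y t) = (b - y t) * A + (y t - a) * B.
    by rewrite /al /be; field; lra.
  exact: expR_chord.
apply: le_trans (_ : \sum_t d t * (al + be * y t) <= _).
  by apply: ler_sum => t _; apply: ler_wpM2l.
apply: le_trans (_ : al + be * eta <= _).
  under eq_bigr => t _ do rewrite mulrDr (mulrC (d t)) (mulrCA (d t)).
  by rewrite big_split /= -!mulr_sumr d_sum1 mulr1 lerD2l ler_wpM2l.
set p := (eta - a) / (b - a).
have p_ge0 : 0 <= p by rewrite divr_ge0 //; lra.
have p_le1 : p <= 1 by rewrite ler_pdivrMr //; lra.
have := hoeffding_bernoulli p_ge0 p_le1 (mulr_ge0 s_ge0 (ltW ba_gt0)).
rewrite exprMn (_ : - (p * (s * (b - a))) = s * (a - eta)); last by rewrite /p; field; lra.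
rewrite (_ : (1 - p) * (s * (b - a)) = s * (b - eta)); last by rewrite /p; field; lra.
suff -> : al + be * eta = (1 - p) * A + p * B by [].
by rewrite /al /be /p; field; lra.
Qed.

End Hoeffding.

Lemma fsbig_nat_bounded (T : Type) (idx : T) (op : Monoid.com_law idx)
    (S : set nat) (F : nat -> T) K :
  (forall i, S i -> (i < K)%N) ->
  \big[op/idx]_(i \in S) F i =
  \big[op/idx]_(i < K) (if (i : nat) \in S then F i else idx).
Proof.
move=> SK; rewrite fsbig_mkcond -(fsbig_widen `I_K setT) //; last first.
  move=> i [_ /= iK]; rewrite /patch; case: ifPn => // /set_mem /SK.
  by move=> h; exfalso; apply: iK.
by rewrite -fsbig_ord.
Qed.

Section Cylinders.
Variables (Q A : finType).
Local Notation run := (run Q A).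

Definition run_upd (w : run) (j : nat) (x : Q * A) : run :=
  fun i => if i == j then x else w i.

Lemma run_upd_lt K w x i : (i <= K)%N -> run_upd w K.+1 x i = w i.
Proof. by rewrite /run_upd => iK; case: eqP iK => // ->; rewrite ltnn. Qed.

(* One representative of each cylinder of runs fixed on positions 0..K. *)
Fixpoint cyl_reps (K : nat) : seq run :=
  if K is K'.+1 then [seq run_upd w K x | w <- cyl_reps K', x <- index_enum _]
  else [seq (fun _ => x) | x <- index_enum _].

Fixpoint agree_upto (K : nat) (r w : run) : bool :=
  if K is K'.+1 then agree_upto K' r w && (r K == w K) else r 0%N == w 0%N.

Lemma agree_uptoP K r w :
  reflect (forall i, (i <= K)%N -> r i = w i) (agree_upto K r w).
Proof.
elim: K => [|K IH] /=.
  by apply: (iffP eqP) => [rw i|]; [rewrite leqn0 => /eqP-> | apply].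
apply: (iffP andP) => [[/IH rw /eqP rwK] i|rw].
  by rewrite leq_eqVlt => /orP[/eqP->//|]; rewrite ltnS; apply: rw.
by split; [apply/IH => i iK; apply: rw; rewrite (leq_trans iK) | apply/eqP/rw].
Qed.

Definition depends_upto {T : Type} K (F : run -> T) :=
  forall r r', (forall i, (i <= K)%N -> r i = r' i) -> F r = F r'.

Variable R : realType.

Lemma sum_agree_upto K r : \sum_(w <- cyl_reps K) ((agree_upto K r w)%:R : R) = 1.
Proof.
have sum_eq1 (y : Q * A) : \sum_x ((y == x)%:R : R) = 1.
  by rewrite (bigD1 y) //= eqxx big1 ?addr0 // => x /negbTE; rewrite eq_sym => ->.
elim: K => [|K IH] /=; first by rewrite big_map sum_eq1.
rewrite big_allpairs_dep /= -[RHS]IH; apply: eq_bigr => w _.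
have agree_upd x : agree_upto K r (run_upd w K.+1 x) = agree_upto K r w.
  apply/agree_uptoP/agree_uptoP => rw i iK; first by rewrite rw // run_upd_lt.
  by rewrite run_upd_lt // rw.
under eq_bigr => x _ do rewrite agree_upd /run_upd eqxx.
by case: agree_upto; rewrite ?sum_eq1 // big1.
Qed.

Lemma depends_upto_sum K (F : run -> R) : depends_upto K F ->
  forall r, F r = \sum_(w <- cyl_reps K) (agree_upto K r w)%:R * F w.
Proof.
move=> dF r; rewrite -[LHS]mulr1 -{1}(sum_agree_upto K r) mulr_sumr.
apply: eq_bigr => w _; case: agree_uptoP => [rw|_]; last by rewrite !mulr0 mul0r.
by rewrite (dF r w rw) mulrC.
Qed.

End Cylinders.

Arguments cyl_reps {Q A} K.

Section Runs.
Variables (Q A : finType).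
Local Notation run := (run Q A).

Lemma prefixS (r : run) k :
  prefix r k.+1 = ext (prefix r k) (r k).2 (r k.+1).1.
Proof. by rewrite /prefix /ext -[in iota _ _]addn1 iotaD map_cat cats1. Qed.

Lemma last_state_ext (h : finrun Q A) al q' : last_state (ext h al q') = q'.
Proof. by rewrite /last_state /ext /= map_rcons last_rcons. Qed.

Lemma last_state_prefix (r : run) k : last_state (prefix r k) = (r k).1.
Proof. by case: k => [//|k]; rewrite prefixS last_state_ext. Qed.

Lemma eq_prefix k (r r' : run) : (forall i, (i <= k)%N -> r i = r' i) ->
  prefix r k = prefix r' k.
Proof.
move=> rr'; rewrite /prefix rr' //; congr pair.
apply/eq_in_map => j; rewrite mem_iota add0n => /andP[_ jk].
by rewrite !rr' // ltnW.
Qed.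

Variable NZ : pred (Q * A).

Lemma nzcountS (r : run) N : nzcount NZ r N.+1 = (nzcount NZ r N + NZ (r N))%N.
Proof. by rewrite /nzcount -addn1 iotaD count_cat /= addn0. Qed.

Lemma eq_nzcount N (r r' : run) : (forall i, (i < N)%N -> r i = r' i) ->
  nzcount NZ r N = nzcount NZ r' N.
Proof.
move=> rr'; apply: eq_in_count => i; rewrite mem_iota add0n => /andP[_ iN].
by rewrite /= rr'.
Qed.

Lemma leq_nzcount (r : run) N N' : (N <= N')%N ->
  (nzcount NZ r N <= nzcount NZ r N')%N.
Proof.
move=> /subnK <-; elim: (N' - N)%N => [|k IH]; first by rewrite add0n.
by rewrite addSn nzcountS (leq_trans IH) // leq_addr.
Qed.

Lemma bounded_nzcount_eventually_notNZ (r : run) m :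
  (forall K, (nzcount NZ r K < m)%N) ->
  exists K1, forall i, (K1 <= i)%N -> ~~ NZ (r i).
Proof.
move=> lt_m; apply: contrapT => /forallNP inf_NZ.
suff [K le_m] : exists K, (m <= nzcount NZ r K)%N by have := lt_m K; lia.
elim: m {lt_m} => [|m [K mK]]; first by exists 0%N.
have /existsNP [i /not_implyP [Ki /negP/negPn NZi]] := inf_NZ K.
by exists i.+1; rewrite nzcountS NZi; have := leq_nzcount r Ki; lia.
Qed.

Variable n : nat.

Definition IndNZnb (r : run) i : bool := NZ (r i) && (nzcount NZ r i < n)%N.

Lemma IndNZnE (r : run) i : (i \in IndNZn NZ n r) = IndNZnb r i.
Proof. by apply/idP/andP => [/set_mem//|]; apply: mem_set. Qed.

Lemma eq_IndNZnb i (r r' : run) : (forall j, (j <= i)%N -> r j = r' j) ->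
  IndNZnb r i = IndNZnb r' i.
Proof.
move=> rr'; rewrite /IndNZnb rr' // (@eq_nzcount i r r') // => j ji.
by rewrite rr' // ltnW.
Qed.

Definition c_upto K (r : run) : nat := \sum_(i < K) IndNZnb r i.

Variables (R : realType) (v : finrun Q A -> R).

Definition s_upto K (r : run) : R :=
  \sum_(i < K) (if IndNZnb r i then v (prefix r i.+1) else 0).

Lemma c_upto_min K r : c_upto K r = minn (nzcount NZ r K) n.
Proof.
elim: K => [|K IH]; first by rewrite /c_upto big_ord0 /nzcount /= min0n.
rewrite /c_upto big_ord_recr /= -/(c_upto K r) IH nzcountS /IndNZnb.
by case: (NZ (r K)) => /=; case: ltnP => h; lia.
Qed.

Lemma c_n_s_n_upto (r : run) K : (forall i, IndNZn NZ n r i -> (i < K)%N) ->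
  c_n NZ n r = c_upto K r /\ s_n v NZ n r = s_upto K r.
Proof.
move=> IndK; rewrite /c_n /s_n !(fsbig_nat_bounded _ _ IndK).
by split; apply: eq_bigr => i _; rewrite IndNZnE.
Qed.

Lemma prefix_run_upd K (w : run) x :
  prefix (run_upd w K.+1 x) K.+1 = ext (prefix w K) (w K).2 x.1.
Proof.
rewrite prefixS run_upd_lt // /run_upd eqxx.
by rewrite (@eq_prefix K _ w) // => j jK; apply: run_upd_lt.
Qed.

Lemma s_upto_depends K : depends_upto K (s_upto K).
Proof.
move=> r r' rr'; apply: eq_bigr => i _; have iK := ltn_ord i.
rewrite (@eq_IndNZnb _ r r') => [|j ji]; last by rewrite rr' // (leq_trans ji) // ltnW.
by rewrite (@eq_prefix i.+1 r r') // => j ji; rewrite rr' // (leq_trans ji).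
Qed.

Lemma c_upto_depends K : depends_upto K (c_upto K).
Proof.
move=> r r' rr'; apply: eq_bigr => i _; have iK := ltn_ord i.
by rewrite (@eq_IndNZnb _ r r') // => j ji; rewrite rr' // (leq_trans ji) // ltnW.
Qed.

Lemma s_upto_run_upd K (w : run) x : s_upto K.+1 (run_upd w K.+1 x) =
  s_upto K w +
  (if IndNZnb w K then v (ext (prefix w K) (w K).2 x.1) else 0).
Proof.
rewrite {1}/s_upto big_ord_recr /= prefix_run_upd.
rewrite (@eq_IndNZnb K _ w) => [|j jK]; last exact: run_upd_lt.
by congr (_ + _); apply: s_upto_depends => i iK; apply: run_upd_lt.
Qed.

Lemma c_upto_run_upd K (w : run) x :
  c_upto K.+1 (run_upd w K.+1 x) = (c_upto K w + IndNZnb w K)%N.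
Proof.
rewrite {1}/c_upto big_ord_recr /=.
rewrite (@eq_IndNZnb K _ w) => [|j jK]; last exact: run_upd_lt.
by congr (_ + _)%N; apply: c_upto_depends => i iK; apply: run_upd_lt.
Qed.

(* Either n indices in NZ occur, or NZ is eventually never visited. *)
Lemma f_nM_eventually (M : R) (r : run) : exists K0, forall K, (K0 <= K)%N ->
  (if (n <= nzcount NZ r K)%N then s_upto K r else - M) = f_nM v NZ n M r.
Proof.
have [[K0 nK0]|/forallNP nK] := pselect (exists K0, (n <= nzcount NZ r K0)%N).
  exists K0 => K K0K.
  have nK : (n <= nzcount NZ r K)%N by rewrite (leq_trans nK0) // leq_nzcount.
  rewrite /f_nM nK; have [|->->] := @c_n_s_n_upto r K.
    move=> i [_ lt_n]; rewrite ltnNge; apply/negP => Ki.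
    by have := leq_nzcount r Ki; lia.
  by rewrite c_upto_min (minn_idPr nK) eqxx.
have nzcount_lt K : (nzcount NZ r K < n)%N by rewrite ltnNge; apply/negP/nK.
have [K1 K1_nNZ] := bounded_nzcount_eventually_notNZ nzcount_lt.
exists 0%N => K _; rewrite leqNgt nzcount_lt.
rewrite /f_nM; have [|-> _] := @c_n_s_n_upto r K1.
  move=> i [NZi _]; rewrite ltnNge; apply/negP => K1i.
  by have := K1_nNZ i K1i; rewrite NZi.
have := nzcount_lt K1; rewrite c_upto_min => lt_n.
by rewrite (minn_idPl (ltnW lt_n)) (ltn_eqF lt_n).
Qed.

End Runs.

Section CylinderExpectation.
Variables (R : realType) (Q A : finType).
Local Notation run := (run Q A).
Variables (delta : Q -> A -> Q -> R) (sigma : finrun Q A -> A -> R) (q : Q).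
Hypotheses (delta_mdp : is_mdp delta) (sigma_strategy : is_strategy sigma).

Local Notation cyl w K := (cyl_prob delta sigma q w K).

(* The expectation of a function depending only on positions 0..K of the run. *)
Definition cyl_expect K (F : run -> R) := \sum_(w <- cyl_reps K) F w * cyl w K.

Lemma cyl_prob_ge0 (w : run) K : 0 <= cyl w K.
Proof.
rewrite /cyl_prob !mulr_ge0 //; first by case: ifP.
  by apply: prodr_ge0 => i _; case: (sigma_strategy (prefix w i)).
by apply: prodr_ge0 => i _; case: (delta_mdp (w i).1 (w i).2).
Qed.

Lemma cyl_prob_run_upd K (w : run) x : cyl (run_upd w K.+1 x) K.+1 =
  cyl w K * (sigma (ext (prefix w K) (w K).2 x.1) x.2 * delta (w K).1 (w K).2 x.1).
Proof.
rewrite /cyl_prob big_ord_recr [in X in _ * X]big_ord_recr /=.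
have updS : run_upd w K.+1 x K.+1 = x by rewrite /run_upd eqxx.
rewrite prefix_run_upd updS !(run_upd_lt _ _ (leq0n K), run_upd_lt _ _ (leqnn K)).
have -> : \prod_(i < K.+1) sigma (prefix (run_upd w K.+1 x) i) (run_upd w K.+1 x i).2 =
          \prod_(i < K.+1) sigma (prefix w i) (w i).2.
  apply: eq_bigr => i _; have iK : (i <= K)%N by rewrite -ltnS.
  rewrite run_upd_lt // (@eq_prefix _ _ i _ w) // => j ji.
  by rewrite run_upd_lt // (leq_trans ji).
have -> : \prod_(i < K) delta (run_upd w K.+1 x i).1 (run_upd w K.+1 x i).2
            (run_upd w K.+1 x i.+1).1 = \prod_(i < K) delta (w i).1 (w i).2 (w i.+1).1.
  by apply: eq_bigr => i _; rewrite !run_upd_lt // ltnW.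
ring.
Qed.

Lemma sum_strategy_step (h : finrun Q A) (qk : Q) (ak : A) (g : Q -> R) :
  \sum_(x : Q * A) g x.1 * (sigma (ext h ak x.1) x.2 * delta qk ak x.1) =
  \sum_(q' : Q) g q' * delta qk ak q'.
Proof.
rewrite -(pair_bigA _ (fun q' a' => g q' * (sigma (ext h ak q') a' * delta qk ak q'))).
apply: eq_bigr => q' _ /=.
under eq_bigr => a' _ do rewrite mulrA (mulrC (g q')) -mulrA.
by rewrite -mulr_suml; case: (sigma_strategy (ext h ak q')) => _ ->; rewrite mul1r mulrC.
Qed.

Lemma cyl_expectS K F : cyl_expect K.+1 F = \sum_(w <- cyl_reps K) cyl w K *
  \sum_(x : Q * A) F (run_upd w K.+1 x) *
     (sigma (ext (prefix w K) (w K).2 x.1) x.2 * delta (w K).1 (w K).2 x.1).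
Proof.
rewrite /cyl_expect big_allpairs_dep; apply: eq_bigr => w _.
by rewrite mulr_sumr; apply: eq_bigr => x _; rewrite cyl_prob_run_upd; ring.
Qed.

Lemma cyl_expect1 K : cyl_expect K (fun _ => 1) = 1.
Proof.
elim: K => [|K IH].
  rewrite /cyl_expect big_map; under eq_bigr => x _ do rewrite mul1r.
  rewrite -(pair_bigA _ (fun q' a' => cyl (fun=> (q', a')) 0)) (bigD1 q) //=.
  rewrite [X in _ + X]big1 ?addr0 => [|q' /negbTE q'q]; last first.
    by rewrite big1 // => a' _; rewrite /cyl_prob q'q !mul0r.
  under eq_bigr => a' _ do rewrite /cyl_prob eqxx big_ord1 big_ord0 !mulr1 mul1r.
  by case: (sigma_strategy (q, [::])).
rewrite cyl_expectS -[RHS]IH; apply: eq_bigr => w _.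
rewrite mul1r (sum_strategy_step _ _ _ (fun=> 1)).
under eq_bigr => q' _ do rewrite mul1r.
by case: (delta_mdp (w K).1 (w K).2) => _ ->; rewrite mulr1.
Qed.

Variables (NZ : pred (Q * A)) (v : finrun Q A -> R) (a b eta s : R) (n : nat).
Hypotheses (a_lt0 : a < 0) (b_gt0 : 0 < b) (a_le_eta : a <= eta) (eta_le0 : eta <= 0).
Hypotheses (s_gt0 : 0 < s) (v_ab : is_valuation a b v).
Hypothesis v_eta : eta_bounded delta NZ eta v.

Let c := s ^+ 2 * (b - a) ^+ 2 / 8.

(* The exponential supermartingale of the Azuma-Hoeffding argument. *)
Definition hoeffding_mart K (r : run) := expR (s * (s_upto NZ n v K r -
  eta * (c_upto NZ n K r)%:R) - c * (c_upto NZ n K r)%:R).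

Lemma hoeffding_mart_run_upd K (w : run) x :
  hoeffding_mart K.+1 (run_upd w K.+1 x) = hoeffding_mart K w *
  (if IndNZnb NZ n w K
   then expR (s * (v (ext (prefix w K) (w K).2 x.1) - eta) - c) else 1).
Proof.
rewrite /hoeffding_mart s_upto_run_upd c_upto_run_upd natrD.
by case: IndNZnb => /=; rewrite ?addr0 ?mulr1 // -expRD; congr expR; ring.
Qed.

Lemma hoeffding_mart_step K :
  cyl_expect K.+1 (hoeffding_mart K.+1) <= cyl_expect K (hoeffding_mart K).
Proof.
rewrite cyl_expectS /cyl_expect; apply: ler_sum => w _.
rewrite mulrC ler_wpM2r ?cyl_prob_ge0 //.
under eq_bigr => x _ do rewrite hoeffding_mart_run_upd -mulrA.
rewrite -mulr_sumr (sum_strategy_step _ _ _ (fun q' => if IndNZnb NZ n w K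
   then expR (s * (v (ext (prefix w K) (w K).2 q') - eta) - c) else 1)).
rewrite -[leRHS]mulr1 ler_wpM2l ?expR_ge0 //.
have [delta_ge0 delta_sum1] := delta_mdp (w K).1 (w K).2.
case: (boolP (IndNZnb NZ n w K)) => [/andP[NZwK _]|_]; last first.
  by rewrite (eq_bigr _ (fun _ _ => mul1r _)) delta_sum1.
under eq_bigr => q' _ do rewrite mulrC expRD mulrA.
rewrite -mulr_suml -[leRHS](mulfV (lt0r_neq0 (expR_gt0 c))) expRN ler_wpM2r //.
have [_ mean_le] := v_eta (prefix w K) (w K).2.
rewrite last_state_prefix -surjective_pairing in mean_le.
apply: hoeffding_lemma => //; last exact: ltW.
- exact: mean_le.
- by rewrite a_le_eta (le_trans eta_le0 (ltW b_gt0)).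
- exact: lt_trans a_lt0 b_gt0.
Qed.

Lemma cyl_expect_hoeffding_mart_le1 K : cyl_expect K (hoeffding_mart K) <= 1.
Proof.
elim: K => [|K IH]; last exact: le_trans (hoeffding_mart_step K) IH.
suff -> : hoeffding_mart 0 = fun=> 1 by rewrite cyl_expect1.
by apply/funext => r; rewrite /hoeffding_mart /s_upto /c_upto !big_ord0 /= !(mulr0, subr0) expR0.
Qed.

Variable M : R.

Definition exp_f_upto K (r : run) := expR (s * ((if (n <= nzcount NZ r K)%N
  then s_upto NZ n v K r else - M) - n%:R * eta)).

Lemma exp_f_upto_depends K : depends_upto K (exp_f_upto K).
Proof.
move=> r r' rr'; rewrite /exp_f_upto (s_upto_depends NZ n v rr') (@eq_nzcount _ _ _ K r r') //.
by move=> i iK; rewrite rr' // ltnW.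
Qed.

Let tail_bound := n%:R * expR (s * (- M + n%:R * Num.max `|a| `|b|) + n%:R * c).

(* If n indices in NZ were seen, exp_f_upto is a rescaled hoeffding_mart;
   otherwise n >= 1 and it is bounded by the second term. *)
Lemma exp_f_upto_le K r :
  exp_f_upto K r <= expR (n%:R * c) * hoeffding_mart K r + tail_bound.
Proof.
have c_ge0 : 0 <= c by rewrite /c mulr_ge0 // mulr_ge0 // sqr_ge0.
rewrite /exp_f_upto; case: leqP => [nK|Kn].
  rewrite ler_wpDr ?mulr_ge0 ?expR_ge0 // /hoeffding_mart c_upto_min.
  by rewrite (minn_idPr nK) -expRD ler_expR; lra.
rewrite ler_wpDl ?mulr_ge0 ?expR_ge0 // /tail_bound.
have n_ge1 : 1 <= (n%:R : R) by rewrite ler1n; case: n Kn.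
apply: le_trans (_ : expR (s * (- M + n%:R * Num.max `|a| `|b|) + n%:R * c) <= _); last first.
  by rewrite -[leLHS]mul1r ler_wpM2r ?expR_ge0.
rewrite ler_expR -[leLHS]addr0; apply: lerD; last by rewrite mulr_ge0 ?ler0n.
rewrite ler_pM2l // lerD2l -mulrN; apply: ler_wpM2l; first exact: ler0n.
by rewrite le_max ler0_norm ?lerN2 ?a_le_eta ?(ltW a_lt0).
Qed.

Lemma cyl_expect_exp_f_upto_le K :
  cyl_expect K (exp_f_upto K) <= expR (n%:R * c) + tail_bound.
Proof.
apply: le_trans (_ : cyl_expect K (fun r => expR (n%:R * c) * hoeffding_mart K r +
  tail_bound) <= _).
  by apply: ler_sum => w _; rewrite ler_wpM2r ?cyl_prob_ge0 ?exp_f_upto_le.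
rewrite /cyl_expect; under eq_bigr => w _ do rewrite mulrDl -mulrA.
rewrite big_split /= -!mulr_sumr lerD //.
  by rewrite -[leRHS]mulr1 ler_wpM2l ?expR_ge0 ?cyl_expect_hoeffding_mart_le1.
have := cyl_expect1 K; rewrite /cyl_expect => sum_cyl1.
by rewrite (eq_bigr _ (fun w _ => esym (mul1r _))) sum_cyl1 mulr1.
Qed.

End CylinderExpectation.

Section RunIntegral.
Variables (R : realType) (Q A : finType).
Local Notation run := (run Q A).
Variables (delta : Q -> A -> Q -> R) (sigma : finrun Q A -> A -> R) (q : Q).
Variables (d : measure_display) (T : measurableType d) (P : probability T R)
  (X : T -> run).
Hypothesis X_law : is_run_law P X delta sigma q.

Definition cyl_set K (w : run) : set T :=
  [set t | forall i, (i <= K)%N -> X t i = w i].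

Lemma measurable_cyl_set K w : measurable (cyl_set K w).
Proof.
elim: K => [|K IH].
  rewrite (_ : cyl_set 0 w = [set t | X t 0%N = w 0%N]); first exact: X_law.1.
  apply/seteqP; split => t /= Xw; first exact: Xw.
  by move=> i; rewrite leqn0 => /eqP->.
rewrite (_ : cyl_set K.+1 w = cyl_set K w `&` [set t | X t K.+1 = w K.+1]).
  exact/measurableI/X_law.1.
apply/seteqP; split => t /= => [Xw|[Xw XwK] i].
  by split; [move=> i iK; apply: Xw; rewrite (leq_trans iK) | apply: Xw].
by rewrite leq_eqVlt => /orP[/eqP->//|]; rewrite ltnS; apply: Xw.
Qed.

Lemma measurable_EFin_indic_cyl K w :
  measurable_fun setT (fun t => (\1_(cyl_set K w) t : R)%:E).
Proof. exact/measurable_EFinP/measurable_indic/measurable_cyl_set. Qed.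

Lemma EFin_depends_upto_sum K (F : run -> R) : depends_upto K F ->
  (fun t => (F (X t))%:E) =
  (fun t => \sum_(w <- cyl_reps K) ((F w)%:E * (\1_(cyl_set K w) t)%:E))%E.
Proof.
move=> dF; apply: funext => t; rewrite (depends_upto_sum dF (X t)) -sumEFin.
apply: eq_bigr => w _; rewrite indicE -EFinM mulrC; congr (_ * _)%:E.
suff -> : (t \in cyl_set K w) = agree_upto K (X t) w by [].
by apply/idP/idP => [/set_mem/agree_uptoP//|/agree_uptoP Xw]; apply: mem_set.
Qed.

Lemma measurable_depends_upto K (F : run -> R) : depends_upto K F ->
  measurable_fun setT (fun t => (F (X t))%:E).
Proof.
move=> dF; rewrite (EFin_depends_upto_sum dF); apply: emeasurable_sum => w.
exact/emeasurable_funM/measurable_EFin_indic_cyl/measurable_cst.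
Qed.

Lemma integral_depends_upto K (F : run -> R) : depends_upto K F ->
  (forall r, 0 <= F r) ->
  (\int[P]_t (F (X t))%:E = (cyl_expect delta sigma q K F)%:E)%E.
Proof.
move=> dF F_ge0; rewrite (EFin_depends_upto_sum dF) ge0_integral_sum; last 3 first.
- exact: measurableT.
- by move=> w; exact/emeasurable_funM/measurable_EFin_indic_cyl/measurable_cst.
- by move=> w t _; rewrite mule_ge0 // lee_fin // indicE_ge0.
rewrite /cyl_expect -sumEFin; apply: eq_bigr => w _.
rewrite ge0_integralZl ?lee_fin ?F_ge0 //; last exact: measurable_EFin_indic_cyl.
rewrite integral_indic; [|exact: measurableT|exact: measurable_cyl_set].
by rewrite setIT EFinM; congr (_ * _)%E; exact: X_law.2.
Qed.

End RunIntegral.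

Theorem mainTheorem13 (R : realType) (Q A : finType)
    (delta : Q -> A -> Q -> R) (q : Q) (a b eta : R)
    (NZ : pred (Q * A)) (v : finrun Q A -> R) :
  is_mdp delta ->
  a < 0 -> 0 < b -> a <= eta -> eta <= 0 ->
  is_valuation a b v ->
  eta_bounded delta NZ eta v ->
  forall (s : R) (n : nat) (M : R) (sigma : finrun Q A -> A -> R),
  0 < s -> 0 <= M -> is_strategy sigma ->
  forall (d : measure_display) (T : measurableType d) (P : probability T R)
         (X : T -> run Q A),
  is_run_law P X delta sigma q ->
  (\int[P]_t (expR (s * (f_nM v NZ n M (X t) - n%:R * eta)))%:E <=
   (expR (n%:R * (s ^+ 2 * (b - a) ^+ 2 / 8)) +
    n%:R * expR (s * (- M + n%:R * Num.max `|a| `|b|)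
                 + n%:R * (s ^+ 2 * (b - a) ^+ 2 / 8)))%:E)%E.
Proof.
(* The bound holds for every M. *)
move=> delta_mdp a_lt0 b_gt0 a_le_eta eta_le0 v_ab v_eta s n M sigma s_gt0 _
  sigma_strategy d T P X X_law.
pose G K t := (exp_f_upto NZ v eta s n M K (X t))%:E.
have G_depends K : depends_upto K (exp_f_upto NZ v eta s n M K).
  exact: exp_f_upto_depends.
have G_lim t :
    (expR (s * (f_nM v NZ n M (X t) - n%:R * eta)))%:E = limn_einf (G^~ t).
  have [K0 K0_f] := f_nM_eventually NZ n v M (X t).
  apply/esym; apply: (cvg_limn_einf_sup _).1; apply: cvg_near_cst.
  by exists K0 => // K /= K0K; rewrite /G /exp_f_upto K0_f.
under eq_integral => t _ do rewrite G_lim.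
apply: le_trans (fatou P measurableT (f := G) _ _) _.
- by move=> K; exact: measurable_depends_upto X_law _ _ (G_depends K).
- by move=> K t _; rewrite lee_fin expR_ge0.
rewrite limn_einf_lim; apply: lime_le; first exact: is_cvg_einfs.
apply: nearW => K; apply: ge_ereal_inf.
exists (\int[P]_t G K t)%E; first by exists K => /=.
rewrite (integral_depends_upto X_law (G_depends K)) => [|r]; last exact: expR_ge0.
by rewrite lee_fin; apply: cyl_expect_exp_f_upto_le.
Qed.
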